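(* Let $V$ be a real vector space, let $v_1,\ldots,v_d\in V$ be linearly independent, and for $i=0,\ldots,d$ let $\sigma^i=S(v_1,\ldots,v_i)$ and $\tau^{d-i}=S(v_{i+1},\ldots,v_d)$. Let $a,b>0$ and define \[A_i=a\sigma^i+b\tau^{d-i}+b(v_1+\cdots+v_i)\ (i\geqslant 0),\qquad B_i=a\sigma^{i-1}+b\tau^{d-i}+b(v_1+\cdots+v_i)\ (i\geqslant1).\] Then $(a+b)\sigma^d=A_0\cup\cdots\cup A_d$, and $(A_0\cup\cdots\cup A_{i-1})\cap A_i=B_i$ for $i\geqslant1$. Consequently, if $\varphi$ is a translation-invariant valuation on $\mathcal{K}(V)$ (with values in an abelian group), then \[\varphi((a+b)\sigma^d)=\sum_{i=0}^d\varphi(a\sigma^i+b\tau^{d-i})-\sum_{i=1}^d\varphi(a\sigma^{i-1}+b\tau^{d-i}).\]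
   Context: For linearly independent $w_1,\ldots,w_k$, $S(w_1,\ldots,w_k)=\{x_1w_1+\cdots+x_kw_k\mid 1\geqslant x_1\geqslant\cdots\geqslant x_k\geqslant0\}$, the $k$-simplex with vertices $0,w_1,w_1+w_2,\ldots,w_1+\cdots+w_k$; for $k=0$ it is $\{0\}$. Sums of sets are Minkowski sums, and adding a vector means translation. $\mathcal{K}(V)$ is the set of nonempty compact convex subsets of $V$; a valuation satisfies $\varphi(B\cup C)=\varphi(B)+\varphi(C)-\varphi(B\cap C)$ whenever $B,C,B\cup C\in\mathcal{K}(V)$. *)

From HB Require Import structures.
From mathcomp Require Import all_boot all_order all_algebra.
From mathcomp Require Import all_classical all_reals all_analysis.
Set Implicit Arguments. Unset Strict Implicit. Unset Printing Implicit Defensive.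
Import Order.TTheory GRing.Theory Num.Theory.
Import numFieldNormedType.Exports.
Local Open Scope classical_set_scope.
Local Open Scope ring_scope.

Section Defs.
Variables (R : realType) (n : nat).
Local Notation V := 'rV[R]_n.

Definition mink_sum (A B : set V) : set V := [set a + b | a in A & b in B].
Definition set_scale (t : R) (A : set V) : set V := [set t *: x | x in A].
Definition set_transl (x : V) (A : set V) : set V := [set x + y | y in A].

Definition convex_set (A : set V) : Prop :=
  forall x y t, A x -> A y -> 0 <= t <= 1 -> A (t *: x + (1 - t) *: y).

Definition convex_body (A : set V) : Prop :=
  A !=set0 /\ compact A /\ convex_set A.

Definition lin_indep (w : nat -> V) (k : nat) : Prop :=
  forall c : nat -> R, \sum_(j < k) c j *: w j = 0 -> forall j, (j < k)%N -> c j = 0.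

Definition simplexS (w : nat -> V) (k : nat) : set V :=
  [set y | exists c : nat -> R,
     (forall j, (j < k)%N -> 0 <= c j <= 1) /\
     (forall j, (j.+1 < k)%N -> c j.+1 <= c j) /\
     y = \sum_(j < k) c j *: w j].

Definition valuation (G : zmodType) (phi : set V -> G) : Prop :=
  forall B C, convex_body B -> convex_body C -> convex_body (B `|` C) ->
    phi (B `|` C) = phi B + phi C - phi (B `&` C).

Definition transl_invariant (G : zmodType) (phi : set V -> G) : Prop :=
  forall K x, convex_body K -> phi (set_transl x K) = phi K.

End Defs.

From Pilot Require Import Defs.
From HB Require Import structures.
From mathcomp Require Import all_boot all_order all_algebra.
From mathcomp Require Import all_classical all_reals all_analysis.
From mathcomp Require Import lra zify.
Set Implicit Arguments. Unset Strict Implicit. Unset Printing Implicit Defensive.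
Import Order.TTheory GRing.Theory Num.Theory.
Import numFieldNormedType.Exports.
Local Open Scope classical_set_scope.
Local Open Scope ring_scope.

(* In the coordinates x_1, ..., x_d of v_1, ..., v_d every set in the
   statement is the image of a box of decreasing coefficient sequences:
   (a+b)sigma^d is given by 0 <= x_j <= a+b; A_i by b <= x_j <= a+b for j <= i
   and 0 <= x_j <= b for j > i; B_i likewise but with x_i = b; and
   A_0 u ... u A_i by 0 <= x_j <= a+b, with x_j <= b for j > i.  Splitting
   according to whether x_(i+1) <= b gives the union formula, and since
   coordinates are unique, intersections are computed bound by bound.  The
   valuation identity is then inclusion-exclusion along the chain
   A_0 u ... u A_i, translation invariance removing the translations. *)

Section DecreasingBoxes.
Variables (R : realType) (n : nat).
Local Notation V := 'rV[R]_n.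

Definition decr_box (k : nat) (l u : nat -> R) : set (nat -> R) :=
  [set c | (forall j, (j < k)%N -> l j <= c j <= u j) /\
           (forall j, (j.+1 < k)%N -> c j.+1 <= c j)].

Definition lincomb (w : nat -> V) (k : nat) (c : nat -> R) : V :=
  \sum_(j < k) c j *: w j.

Definition polytopeS (w : nat -> V) (k : nat) (l u : nat -> R) : set V :=
  lincomb w k @` decr_box k l u.

Lemma simplexS_polytopeS w k : simplexS w k = polytopeS w k (fun=> 0) (fun=> 1).
Proof.
by apply/seteqP; split=> [_ [c [bd [dec ->]]] | _ [c [bd dec] <-]]; exists c.
Qed.

Lemma decr_box_ext k l u c c' : (forall j, (j < k)%N -> c j = c' j) ->
  decr_box k l u c -> decr_box k l u c'.
Proof.
move=> eq_cc' [bd dec]; split=> j jk; first by rewrite -eq_cc' // bd.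
by rewrite -!eq_cc' ?dec //; lia.
Qed.

Lemma decr_box_le k l u c : decr_box k l u c ->
  forall i j, (i <= j)%N -> (j < k)%N -> c j <= c i.
Proof.
move=> [_ dec] i; elim=> [|j IH] ij jk; first by have -> : i = 0%N by lia.
have [lt_ij | ?] := ltnP i j.+1; last by have -> : i = j.+1 by lia.
by rewrite (le_trans (dec j jk)) ?IH //; lia.
Qed.

Lemma decr_box_sub k l u l' u' :
  (forall j, (j < k)%N -> l' j <= l j) -> (forall j, (j < k)%N -> u j <= u' j) ->
  decr_box k l u `<=` decr_box k l' u'.
Proof.
move=> ll' uu' c [bd dec]; split=> // j jk; have /andP[lc cu] := bd j jk.
by rewrite (le_trans (ll' j jk) lc) (le_trans cu (uu' j jk)).
Qed.

Lemma decr_boxI k l u l' u' :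
  decr_box k l u `&` decr_box k l' u' =
  decr_box k (fun j => Num.max (l j) (l' j)) (fun j => Num.min (u j) (u' j)).
Proof.
apply/seteqP; split=> [c [[bd dec] [bd' _]] | c [bd dec]].
  split=> // j jk; have /andP[? ?] := bd j jk; have /andP[? ?] := bd' j jk.
  by rewrite ge_max le_min; do !(apply/andP; split).
by split; split=> // j jk; have := bd j jk;
  rewrite ge_max le_min => /andP[/andP[? ?] /andP[? ?]]; apply/andP.
Qed.

Lemma lincomb_ext w k c c' : (forall j, (j < k)%N -> c j = c' j) ->
  lincomb w k c = lincomb w k c'.
Proof. by move=> eq_cc'; apply: eq_bigr => j _; rewrite eq_cc'. Qed.

Lemma lincombD w k c c' :
  lincomb w k (fun j => c j + c' j) = lincomb w k c + lincomb w k c'.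
Proof. by rewrite /lincomb -big_split; apply: eq_bigr => j _; rewrite scalerDl. Qed.

Lemma lincomb_cst w k r : lincomb w k (fun=> r) = r *: \sum_(j < k) w j.
Proof. by rewrite scaler_sumr. Qed.

Lemma lincomb_take w k m c : (m <= k)%N ->
  lincomb w k (fun j => if (j < m)%N then c j else 0) = lincomb w m c.
Proof.
move=> mk; rewrite /lincomb (big_ord_widen k (fun j => c j *: w j)) // [RHS]big_mkcond.
by apply: eq_bigr => j _; case: ifP; rewrite ?scale0r.
Qed.

Lemma lincomb_drop w k m c : (m <= k)%N ->
  lincomb w k (fun j => if (j < m)%N then 0 else c (j - m)%N) =
  lincomb (fun j => w (m + j)%N) (k - m) c.
Proof.
move=> mk; rewrite /lincomb.
rewrite -(big_mkord xpredT (fun j => (if (j < m)%N then 0 else c (j - m)%N) *: w j)).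
rewrite -(big_mkord xpredT (fun j => c j *: w (m + j)%N)).
rewrite (big_cat_nat (leq0n m) mk) /= big_nat_cond big1 ?add0r; last first.
  by move=> j /andP[/andP[_ ->] _]; rewrite scale0r.
rewrite -{1}(add0n m) big_addn; apply: eq_big_nat => j _.
by rewrite addnK ltnNge leq_addl addnC.
Qed.

Lemma lincomb_inj w k c c' : lin_indep w k ->
  lincomb w k c = lincomb w k c' -> forall j, (j < k)%N -> c j = c' j.
Proof.
move=> li eq_cc' j jk; apply/eqP; rewrite -subr_eq0; apply/eqP.
apply: (li (fun j => c j - c' j)) => //.
under eq_bigr do rewrite scalerBl.
by rewrite sumrB -/(lincomb w k c) eq_cc' subrr.
Qed.

Lemma polytopeS_sub w k l u l' u' :
  (forall j, (j < k)%N -> l' j <= l j) -> (forall j, (j < k)%N -> u j <= u' j) ->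
  polytopeS w k l u `<=` polytopeS w k l' u'.
Proof. by move=> ll' uu'; apply/image_subset/decr_box_sub. Qed.

Lemma polytopeSI w k l u l' u' : lin_indep w k ->
  polytopeS w k l u `&` polytopeS w k l' u' =
  polytopeS w k (fun j => Num.max (l j) (l' j)) (fun j => Num.min (u j) (u' j)).
Proof.
move=> li; rewrite /polytopeS -decr_boxI; apply/seteqP; split; last first.
  exact: sub_image_setI.
move=> _ [[c box_c <-] [c' box_c' /lincomb_inj eq_c'c]].
by exists c => //; split=> //; apply: decr_box_ext box_c' => j jk; rewrite eq_c'c.
Qed.

Lemma polytopeS_convex w k l u : Defs.convex_set (polytopeS w k l u).
Proof.
move=> _ _ t [c [bd dec] <-] [c' [bd' dec'] <-] /andP[t0 t1].
exists (fun j => t * c j + (1 - t) * c' j); last first.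
  rewrite /lincomb !scaler_sumr -big_split; apply: eq_bigr => j _.
  by rewrite /= !scalerA -scalerDl.
split=> [j jk | j jk]; last by have := dec j jk; have := dec' j jk; nra.
have /andP[? ?] := bd j jk; have /andP[? ?] := bd' j jk; apply/andP; split; nra.
Qed.

Lemma scale_polytopeS w k l u t : 0 < t ->
  set_scale t (polytopeS w k l u) =
  polytopeS w k (fun j => t * l j) (fun j => t * u j).
Proof.
move=> t_gt0; have t_neq0 : t != 0 by rewrite gt_eqF.
have boxZ c : decr_box k (fun j => t * l j) (fun j => t * u j) (fun j => t * c j) =
    decr_box k l u c.
  have leZ x y : (t * x <= t * y) = (x <= y) by rewrite ler_pM2l.
  by rewrite /decr_box /=; apply/propext; split=> -[bd dec];
    split=> [j /bd | j /dec]; rewrite !leZ.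
have lincombZ c : t *: lincomb w k c = lincomb w k (fun j => t * c j).
  by rewrite /lincomb scaler_sumr; apply: eq_bigr => j _; rewrite scalerA.
apply/seteqP; split=> [_ [_ [c box_c <-] <-] | _ [c box_c <-]].
  by exists (fun j => t * c j); rewrite ?boxZ // lincombZ.
exists (lincomb w k (fun j => c j / t)); last first.
  by rewrite lincombZ; apply: lincomb_ext => j _; rewrite mulrC divfK.
exists (fun j => c j / t) => //; rewrite -boxZ.
by apply: decr_box_ext box_c => j _; rewrite mulrC divfK.
Qed.

Lemma scale_simplexS w k t : 0 < t ->
  set_scale t (simplexS w k) = polytopeS w k (fun=> 0) (fun=> t).
Proof.
move=> t_gt0; rewrite simplexS_polytopeS scale_polytopeS //.
by congr polytopeS; apply/funext => j; rewrite ?mulr0 ?mulr1.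
Qed.

Lemma polytopeS_neq0 w k l u : decr_box k l u l -> polytopeS w k l u !=set0.
Proof. by move=> box_l; exists (lincomb w k l), l. Qed.

Lemma closed_le_continuous (T : topologicalType) (f g : T -> R) :
  continuous f -> continuous g -> closed [set x | f x <= g x].
Proof.
move=> cf cg; rewrite (_ : mkset _ = (g - f) @^-1` [set r | 0 <= r]).
  apply: preimage_closed; last exact: closed_ge.
  by move=> x _; have := continuousB (cg x) (cf x).
by apply/seteqP; split=> x /=; rewrite subr_ge0.
Qed.

Lemma closed_decr_box_coord k l u :
  closed [set y : 'rV[R]_k.+1 | decr_box k l u (fun j => y ord0 (inord j))].
Proof.
have ccoord j : continuous (fun y : 'rV[R]_k.+1 => y ord0 (inord j)).
  exact: coord_continuous.
have -> : [set y : 'rV[R]_k.+1 | decr_box k l u (fun j => y ord0 (inord j))] =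
  \bigcap_(j in [set j | (j < k)%N])
     ([set y | l j <= y ord0 (inord j)] `&` [set y | y ord0 (inord j) <= u j]) `&`
  \bigcap_(j in [set j | (j.+1 < k)%N]) [set y | y ord0 (inord j.+1) <= y ord0 (inord j)].
  apply/seteqP; split=> y [bd dec]; split=> j jk.
  - by have /andP[? ?] := bd j jk.
  - exact: dec.
  - by have [/= -> ->] := bd j jk.
  - exact: dec.
apply: closedI; apply: closed_bigI => j _; last exact: closed_le_continuous.
by apply: closedI; apply: closed_le_continuous => //; apply: cst_continuous.
Qed.

Lemma continuous_lincomb_coord w k :
  continuous (fun y : 'rV[R]_k.+1 => lincomb w k (fun j => y ord0 (inord j))).
Proof.
have -> : (fun y : 'rV[R]_k.+1 => lincomb w k (fun j => y ord0 (inord j))) =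
    \sum_(j < k) (fun y : 'rV[R]_k.+1 => y ord0 (inord j) *: w j).
  by rewrite fct_sumE.
apply: (big_ind (fun f => continuous f)) => [|f g cf cg x|j _ x].
- exact: (@cst_continuous _ _ (0 : 'rV[R]_n)).
- exact: continuousD (cf x) (cg x).
- exact/continuousZr_tmp/coord_continuous.
Qed.

(* Coefficient sequences are parametrized by row vectors with one junk
   coordinate, so that [inord] is available even when [k = 0]. *)
Lemma polytopeS_compact w k l u : compact (polytopeS w k l u).
Proof.
pose P := [set y : 'rV[R]_k.+1 |
  decr_box k l u (fun j => y ord0 (inord j)) /\ y ord0 ord_max = 0].
have -> : polytopeS w k l u = (fun y => lincomb w k (fun j => y ord0 (inord j))) @` P.
  apply/seteqP; split=> [_ [c box_c <-] | _ [y [box_y _] <-]]; last first.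
    by exists (fun j => y ord0 (inord j)).
  pose y := \row_(i < k.+1) if (i < k)%N then c i else 0.
  have yE j : (j < k)%N -> y ord0 (inord j) = c j.
    by move=> jk; rewrite mxE inordK ?jk //; lia.
  exists y; last exact: lincomb_ext.
  split; first by apply: decr_box_ext box_c => j jk; rewrite yE.
  by rewrite mxE ltnn.
apply: continuous_compact; first exact/continuous_subspaceT/continuous_lincomb_coord.
pose I (i : 'I_k.+1) := if (i < k)%N then `[l i, u i]%classic else [set 0 : R].
have cI i : compact (I i).
  by rewrite /I; case: ifP => _; [exact: segment_compact | exact: compact_set1].
apply: subclosed_compact (rV_compact cI) _.
  apply: closedI; first exact: closed_decr_box_coord.
  apply: (@preimage_closed _ _ (fun y : 'rV[R]_k.+1 => y ord0 ord_max) [set r | r = 0]).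
    by move=> y _; apply: coord_continuous.
  exact: closed_eq.
move=> y [[bd _] y_max] i; rewrite /I; case: ifPn => ik /=.
  by have := bd i ik; rewrite inord_val in_itv.
by have -> : i = ord_max by apply/val_inj => /=; have := ltn_ord i; lia.
Qed.

Lemma polytopeS_body w k l u : decr_box k l u l -> convex_body (polytopeS w k l u).
Proof.
move=> box_l; split; first exact: polytopeS_neq0.
by split; [exact: polytopeS_compact | exact: polytopeS_convex].
Qed.

End DecreasingBoxes.

Section Valuations.
Variables (R : realType) (n : nat) (G : zmodType) (phi : set 'rV[R]_n -> G).

Lemma set_translK (t : 'rV[R]_n) K : set_transl (- t) (set_transl t K) = K.
Proof.
apply/seteqP; split=> [_ [_ [x Kx <-] <-] | x Kx]; first by rewrite addKr.
by exists (t + x); [exists x | rewrite addKr].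
Qed.

Lemma transl_invariant_transl t K : transl_invariant phi ->
  convex_body (set_transl t K) -> phi (set_transl t K) = phi K.
Proof. by move=> ti tK; rewrite -[in RHS](set_translK t K) [RHS]ti. Qed.

Lemma valuation_chain (U C D : nat -> set 'rV[R]_n) m : valuation phi ->
  (forall i, (i <= m)%N -> convex_body (U i) /\ convex_body (C i)) ->
  U 0%N = C 0%N ->
  (forall i, (i < m)%N -> U i `|` C i.+1 = U i.+1 /\ U i `&` C i.+1 = D i.+1) ->
  phi (U m) = \sum_(i < m.+1) phi (C i) - \sum_(1 <= i < m.+1) phi (D i).
Proof.
move=> val; elim: m => [|m IH] bodies U0 chain.
  by rewrite big_ord1 big_geq // subr0 U0.
have [UC UD] := chain m (ltnSn m).
have [bodyU _] := bodies m (leqnSn m).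
have [bodyU' bodyC] := bodies m.+1 (leqnn _).
rewrite -UC val ?UC // UD IH //; last 2 first.
- by move=> i im; apply: bodies; lia.
- by move=> i im; apply: chain; lia.
rewrite [in RHS]big_ord_recr [in RHS]big_nat_recr //= opprD !addrA; congr (_ + _).
by rewrite addrAC.
Qed.

End Valuations.

Section StaircaseCells.
Variables (R : realType) (n d : nat) (v : nat -> 'rV[R]_n) (a b : R).
Hypotheses (a_gt0 : 0 < a) (b_gt0 : 0 < b).

Definition lower (m j : nat) : R := if (j < m)%N then b else 0.
Definition upper (m j : nat) : R := if (j < m)%N then a + b else b.
Definition cell (m m' : nat) : set 'rV[R]_n := polytopeS v d (lower m) (upper m').

Ltac case_bounds := rewrite /lower /upper;
  repeat match goal with |- context[(?j < ?m)%N] => case: (ltnP j m) => ? end.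
(* [lra] does not use section hypotheses, hence the [move:]. *)
Ltac bounds_arith := move: a_gt0 b_gt0 => ? ?; first [lra | exfalso; lia].

Lemma lower_mono m m' j : (m <= m')%N -> lower m j <= lower m' j.
Proof. by move=> mm'; case_bounds; bounds_arith. Qed.

Lemma upper_mono m m' j : (m <= m')%N -> upper m j <= upper m' j.
Proof. by move=> mm'; case_bounds; bounds_arith. Qed.

Lemma cell_body m m' : convex_body (cell m m').
Proof.
apply: polytopeS_body; split=> j _; case_bounds; rewrite ?lexx //; bounds_arith.
Qed.

Lemma cell_sub m m' m2 m2' :
  (m2 <= m)%N -> (m' <= m2')%N -> cell m m' `<=` cell m2 m2'.
Proof.
by move=> m2m m'm2'; apply: polytopeS_sub => j _; [apply: lower_mono | apply: upper_mono].
Qed.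

Lemma cellU i : (i < d)%N -> cell 0 i `|` cell i.+1 i.+1 = cell 0 i.+1.
Proof.
move=> lt_id; apply/seteqP; split=> [x [] | _ [c box_c <-]]; try by apply: cell_sub.
have ci_le j : (j <= i)%N -> c i <= c j by move=> ji; apply: (decr_box_le box_c).
have cj_le j : (i <= j)%N -> (j < d)%N -> c j <= c i by apply: (decr_box_le box_c).
case: box_c => bd dec; have [ci_le_b | b_lt_ci] := lerP (c i) b; [left | right];
  exists c => //; split=> // j jd; have := bd j jd.
- case_bounds; try (exfalso; lia); move=> /andP[? ?]; apply/andP; split=> //.
  by have := cj_le j ltac:(lia) jd; bounds_arith.
- case_bounds; try (exfalso; lia); move=> /andP[? ?]; apply/andP; split=> //.
  by have := ci_le j ltac:(lia); bounds_arith.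
Qed.

Lemma cellI i : lin_indep v d -> cell 0 i `&` cell i.+1 i.+1 = cell i.+1 i.
Proof.
move=> li; rewrite /cell polytopeSI //; congr polytopeS; apply/funext => j.
  by rewrite max_r // lower_mono.
by rewrite min_l // upper_mono.
Qed.

Lemma bigcup_cell i : (i <= d)%N -> \big[setU/set0]_(k < i.+1) cell k k = cell 0 i.
Proof.
elim: i => [|i IH] le_id; first by rewrite big_ord1.
by rewrite big_ord_recr /= IH ?cellU //; lia.
Qed.

Lemma scale_simplexS_cell : set_scale (a + b) (simplexS v d) = cell 0 d.
Proof.
rewrite scale_simplexS; last by bounds_arith.
apply/seteqP; split; apply: polytopeS_sub => j jd; case_bounds; bounds_arith.
Qed.

Definition glue (k i : nat) (x y : nat -> R) (j : nat) : R :=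
  if (j < k)%N then b + x j else if (j < i)%N then b else y (j - i)%N.

Lemma lincomb_glue k i x y : (k <= i <= d)%N ->
  lincomb v d (glue k i x y) =
  b *: \sum_(j < i) v j + (lincomb v k x + lincomb (fun j => v (i + j)%N) (d - i) y).
Proof.
move=> /andP[ki le_id].
have -> : glue k i x y = fun j => (if (j < i)%N then b else 0) +
    ((if (j < k)%N then x j else 0) + (if (j < i)%N then 0 else y (j - i)%N)).
  apply/funext => j; rewrite /glue.
  by case: (ltnP j k) => jk; case: (ltnP j i) => ji; rewrite ?addr0 ?add0r //; lia.
by rewrite !lincombD lincomb_take // lincomb_cst lincomb_take ?lincomb_drop //; lia.
Qed.

Lemma glue_decr_box k i x y : (k <= i <= d)%N ->
  decr_box k (fun=> 0) (fun=> a) x -> decr_box (d - i) (fun=> 0) (fun=> b) y ->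
  decr_box d (lower i) (upper k) (glue k i x y).
Proof.
move=> /andP[ki le_id] [xbd xdec] [ybd ydec]; split=> j jd; rewrite /glue.
  case_bounds; try (exfalso; lia); rewrite ?lexx //.
    by have := xbd j ltac:(done); bounds_arith.
  by have := ybd (j - i)%N ltac:(lia); bounds_arith.
case: (ltnP j.+1 k) => [jk | kj].
  by have := xdec j jk; rewrite (ltnW jk); bounds_arith.
case: (ltnP j k) => [jk | kj'].
  have := xbd j jk; case: ifP => ji; first by bounds_arith.
  by have := ybd (j.+1 - i)%N ltac:(lia); bounds_arith.
case: (ltnP j.+1 i) => [ji | ij]; first by rewrite (ltnW ji) lexx.
case: (ltnP j i) => [ji | ij'].
  by have := ybd (j.+1 - i)%N ltac:(lia); bounds_arith.
by rewrite subSn // ydec //; lia.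
Qed.

Lemma decr_box_glue k i c : (k <= i <= d)%N -> decr_box d (lower i) (upper k) c ->
  [/\ decr_box k (fun=> 0) (fun=> a) (fun j => c j - b),
      decr_box (d - i) (fun=> 0) (fun=> b) (fun j => c (i + j)%N) &
      forall j, (j < d)%N -> c j = glue k i (fun j => c j - b) (fun j => c (i + j)%N) j].
Proof.
move=> /andP[ki le_id] [bd dec]; split.
- split=> j jk; last by rewrite lerB // dec //; lia.
  by have := bd j ltac:(lia); case_bounds; try (exfalso; lia); bounds_arith.
- split=> j jdi; last by rewrite addnS dec //; lia.
  by have := bd (i + j)%N ltac:(lia); case_bounds; try (exfalso; lia); bounds_arith.
- move=> j jd; rewrite /glue; case: (ltnP j k) => jk; first by rewrite addrC subrK.
  case: (ltnP j i) => ji; last by rewrite subnKC.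
  have := bd j jd; case_bounds; try (exfalso; lia).
  by move=> /andP[? ?]; apply/le_anti/andP.
Qed.

Lemma transl_mink_simplexS k i : (k <= i <= d)%N ->
  set_transl (b *: \sum_(j < i) v j)
    (mink_sum (set_scale a (simplexS v k))
              (set_scale b (simplexS (fun j => v (i + j)%N) (d - i)))) = cell i k.
Proof.
move=> kid; rewrite !scale_simplexS //.
apply/seteqP; split=> [_ [_ [_ [x box_x <-] [_ [y box_y <-] <-]] <-] | _ [c box_c <-]].
  by exists (glue k i x y); [exact: glue_decr_box | rewrite lincomb_glue].
have [box_x box_y cE] := decr_box_glue kid box_c.
exists (lincomb v k (fun j => c j - b) +
        lincomb (fun j => v (i + j)%N) (d - i) (fun j => c (i + j)%N)).
  exists (lincomb v k (fun j => c j - b)); first by exists (fun j => c j - b).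
  by exists (lincomb (fun j => v (i + j)%N) (d - i) (fun j => c (i + j)%N)) => //;
    exists (fun j => c (i + j)%N).
by rewrite -lincomb_glue //; apply/esym/lincomb_ext.
Qed.

Lemma transl_invariant_cell (G : zmodType) (phi : set 'rV[R]_n -> G) k i :
  transl_invariant phi -> (k <= i <= d)%N ->
  phi (cell i k) = phi (mink_sum (set_scale a (simplexS v k))
                         (set_scale b (simplexS (fun j => v (i + j)%N) (d - i)))).
Proof.
move=> ti kid; rewrite -(transl_mink_simplexS kid) transl_invariant_transl //.
by rewrite transl_mink_simplexS //; apply: cell_body.
Qed.

End StaircaseCells.

Theorem lemma4p2 (R : realType) (n d : nat) (v : nat -> 'rV[R]_n)
  (a b : R) :
  lin_indep v d -> 0 < a -> 0 < b ->
  let sigma := fun i => simplexS v i in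
  let tau := fun i => simplexS (fun j => v (i + j)%N) (d - i) in
  let A := fun i => set_transl (b *: \sum_(j < i) v j)
                      (mink_sum (set_scale a (sigma i)) (set_scale b (tau i))) in
  let B := fun i => set_transl (b *: \sum_(j < i) v j)
                      (mink_sum (set_scale a (sigma i.-1)) (set_scale b (tau i))) in
  [/\ set_scale (a + b) (sigma d) = \big[setU/set0]_(i < d.+1) A i,
      (forall i, (1 <= i <= d)%N ->
         (\big[setU/set0]_(k < i) A k) `&` A i = B i)
    & forall (G : zmodType) (phi : set 'rV[R]_n -> G),
        valuation phi -> transl_invariant phi ->
        phi (set_scale (a + b) (sigma d)) =
          \sum_(i < d.+1) phi (mink_sum (set_scale a (sigma i)) (set_scale b (tau i)))
        - \sum_(1 <= i < d.+1) phi (mink_sum (set_scale a (sigma i.-1)) (set_scale b (tau i)))].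
Proof.
move=> li a_gt0 b_gt0 sigma tau A B.
have bigA i : (i <= d)%N -> \big[setU/set0]_(k < i.+1) A k = cell d v a b 0 i.
  move=> le_id; rewrite -bigcup_cell //; apply: eq_bigr => k _.
  by apply: transl_mink_simplexS => //; rewrite leqnn /=; have := ltn_ord k; lia.
have sigmaE := scale_simplexS_cell d v a_gt0 b_gt0.
split=> [|[//|i] /andP[_ le_id] | G phi val ti]; first by rewrite sigmaE bigA.
  by rewrite bigA ?/A ?/B ?transl_mink_simplexS ?cellI //; lia.
rewrite sigmaE (@valuation_chain _ _ _ _ (fun i => cell d v a b 0 i)
  (fun i => cell d v a b i i) (fun i => cell d v a b i i.-1)) //.
- congr (_ - _); [apply: eq_bigr => i _ | apply: eq_big_nat => i /andP[i_gt0 le_id]];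
    rewrite transl_invariant_cell //; [rewrite leqnn /=; have := ltn_ord i | ]; lia.
- by move=> i _; split; apply: cell_body.
- by move=> i lt_id; rewrite cellU ?cellI.
Qed.
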